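(* Let $\bm{Z}$ be a $p\times q$ matrix with rows $\bm{z}_1^T,\ldots,\bm{z}_p^T$, and let $\bm{U}$ be the submatrix consisting of the distinct rows of $\bm{Z}$; suppose $\bm{U}$ has $q$ rows and rank $q$. Let $m_j(\bm{\omega})=1/(1+e^{-\bm{z}_j^T\bm{\omega}})$, let $\bm{\omega}\sim N(\mathbf0,g(\bm{Z}^T\bm{Z}/p)^{-1})$ with $g>0$ (prior density $\pi(\bm{\omega})$), and let $f(\bm{\omega})=\sum_{\bm{\gamma}\in\{0,1\}^p}\pi(\bm{\gamma}\mid\bm{y},\bm{\omega}')\log\pi(\bm{\gamma}\mid\bm{\omega})$ with $\pi(\bm{\gamma}\mid\bm{\omega})=\prod_j\mathrm{Bern}(\gamma_j;m_j(\bm{\omega}))$ and a fixed posterior $\pi(\bm{\gamma}\mid\bm{y},\bm{\omega}')$ with inclusion probabilities $\hat\pi_i=\pi(\gamma_i=1\mid\bm{y},\bm{\omega}')$. Let $\tilde{\bm{Z}}=\bm{Z}\bm{U}^{-1}$ with entries $\tilde z_{ij}$, let $a_j=\sum_{i=1}^p\tilde z_{ij}\hat\pi_i\big/\sum_{i=1}^p\tilde z_{ij}$, and let $h(a,c)$ denote the solution $w$ of $1/(1+e^{-w})+w/c=a$. Define $\tilde\omega_j=h(a_j,gp)$ for $j=1,\ldots,q$ and $\hat{\bm{\omega}}=\bm{U}^{-1}\tilde{\bm{\omega}}$. Then $\nabla_{\bm{\omega}}f(\hat{\bm{\omega}})+\nabla_{\bm{\omega}}\log\pi(\hat{\bm{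\omega}})=\mathbf0$.
   Context: $\pi(\bm{\gamma}\mid\bm{y},\bm{\omega}')\propto p(\bm{y}\mid\bm{\gamma})\pi(\bm{\gamma}\mid\bm{\omega}')$ is the posterior over models at the current EM iterate $\bm{\omega}'$; $f$ plus $\log\pi(\bm{\omega})$ is the M-step objective. *)

From HB Require Import structures.
From mathcomp Require Import all_boot all_order all_algebra.
From mathcomp Require Import all_classical all_reals all_analysis.
Set Implicit Arguments. Unset Strict Implicit. Unset Printing Implicit Defensive.
Import Order.TTheory GRing.Theory Num.Theory.
Import numFieldNormedType.Exports.
Local Open Scope ring_scope.

Section Defs.
Variable R : realType.

Definition logistic (w : R) : R := 1 / (1 + expR (- w)).

Definition mprob (p q : nat) (Z : 'M[R]_(p, q)) (omega : 'cV[R]_q) (j : 'I_p) : R :=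
  logistic ((row j Z *m omega) 0 0).

Definition bern (b : bool) (x : R) : R := if b then x else 1 - x.

Definition prior_gamma (p q : nat) (Z : 'M[R]_(p, q)) (omega : 'cV[R]_q)
  (gamma : {ffun 'I_p -> bool}) : R :=
  \prod_(j < p) bern (gamma j) (mprob Z omega j).

(* pi(gamma | y, omega') ∝ p(y | gamma) pi(gamma | omega'), lik gamma = p(y|gamma) *)
Definition posterior (p q : nat) (Z : 'M[R]_(p, q)) (lik : {ffun 'I_p -> bool} -> R)
  (omega' : 'cV[R]_q) (gamma : {ffun 'I_p -> bool}) : R :=
  lik gamma * prior_gamma Z omega' gamma /
  \sum_(delta : {ffun 'I_p -> bool}) lik delta * prior_gamma Z omega' delta.

Definition pihat (p q : nat) (Z : 'M[R]_(p, q)) (lik : {ffun 'I_p -> bool} -> R)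
  (omega' : 'cV[R]_q) (i : 'I_p) : R :=
  \sum_(gamma : {ffun 'I_p -> bool} | gamma i) posterior Z lik omega' gamma.

Definition fobj (p q : nat) (Z : 'M[R]_(p, q)) (lik : {ffun 'I_p -> bool} -> R)
  (omega' : 'cV[R]_q) (omega : 'cV[R]_q) : R :=
  \sum_(gamma : {ffun 'I_p -> bool})
     posterior Z lik omega' gamma * ln (prior_gamma Z omega gamma).

Definition mvn0_pdf (q : nat) (Sigma : 'M[R]_q) (x : 'cV[R]_q) : R :=
  (Num.sqrt ((2 * pi) ^+ q * \det Sigma))^-1 *
  expR (- (1 / 2) * ((x^T *m invmx Sigma *m x) 0 0)).

Definition prior_cov (p q : nat) (Z : 'M[R]_(p, q)) (g : R) : 'M[R]_q :=
  g *: invmx ((p%:R)^-1 *: (Z^T *m Z)).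

Definition prior_omega (p q : nat) (Z : 'M[R]_(p, q)) (g : R) (omega : 'cV[R]_q) : R :=
  mvn0_pdf (prior_cov Z g) omega.

Definition mstep_obj (p q : nat) (Z : 'M[R]_(p, q)) (g : R)
  (lik : {ffun 'I_p -> bool} -> R) (omega' : 'cV[R]_q) (omega : 'cV[R]_q) : R :=
  fobj Z lik omega' omega + ln (prior_omega Z g omega).

(* U is "the submatrix of distinct rows of Z" (in some order): its rows are
   pairwise distinct, every row of U is a row of Z and every row of Z is a row of U *)
Definition distinct_rows_of (p q : nat) (Z : 'M[R]_(p, q)) (U : 'M[R]_q) : Prop :=
  injective (fun k : 'I_q => row k U) /\
  (forall k : 'I_q, exists i : 'I_p, row i Z = row k U) /\
  (forall i : 'I_p, exists k : 'I_q, row i Z = row k U).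

Definition acoef (p q : nat) (Z : 'M[R]_(p, q)) (U : 'M[R]_q)
  (lik : {ffun 'I_p -> bool} -> R) (omega' : 'cV[R]_q) (j : 'I_q) : R :=
  (\sum_(i < p) (Z *m invmx U) i j * pihat Z lik omega' i) /
  (\sum_(i < p) (Z *m invmx U) i j).

End Defs.

From HB Require Import structures.
From mathcomp Require Import all_boot all_order all_algebra.
From mathcomp Require Import all_classical all_reals all_analysis.
From mathcomp Require Import ring lra.
Import Order.TTheory GRing.Theory Num.Theory.
Import numFieldNormedType.Exports.
Set Implicit Arguments. Unset Strict Implicit. Unset Printing Implicit Defensive.
Local Open Scope ring_scope.

(* Along a direction v, the log-likelihood part f of the M-step objective has
   derivative sum_i (pihat_i - m_i(omega)) (Z v)_i, and the g-prior, whose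
   precision matrix is Z^T Z / (g p), contributes
   - sum_i (Z omega)_i (Z v)_i / (g p).  Every row of Z is a row of the
   invertible U, so Z = K U for the 0/1 matrix K sending row i of Z to its copy
   kappa(i) among the rows of U.  Hence Z U^-1 = K: a_j is the mean of pihat over
   the class kappa^-1(j), and (Z omega_hat)_i = omega_tilde_kappa(i).  The
   defining equation of h turns m_i(omega_hat) + (Z omega_hat)_i / (g p) into
   a_kappa(i), so the derivative along e_k is
   sum_i U_kappa(i),k (pihat_i - a_kappa(i)), which vanishes class by class. *)

Section DirectionalDerivative.
Variables (R : realType) (V : normedModType R).

Lemma is_derive_lineP (W : normedModType R) (f : V -> W) (x v : V) (df : W) :
  is_derive x v f df <-> is_derive (0 : R) 1 (fun h : R => f (h *: v + x)) df.
Proof.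
have DE : 'D_1 (fun h : R => f (h *: v + x)) (0 : R) = 'D_v f x.
  rewrite /derive; do 2 f_equal; apply/funext => h /=.
  by rewrite addr0 scale0r add0r [_%:A]mulr1.
split=> -[dfx <-].
  exact: DeriveDef ((derivable1P f x v).1 dfx) DE.
exact: DeriveDef ((derivable1P f x v).2 dfx) (esym DE).
Qed.

Lemma is_derive_comp1 (f : R -> R) (g : V -> R) (x v : V) (a b : R) :
  is_derive (g x) 1 f a -> is_derive x v g b -> is_derive x v (f \o g) (a * b).
Proof.
move=> df /is_derive_lineP dg; apply/is_derive_lineP.
rewrite -[in g x](add0r x) -(scale0r v) in df.
exact: is_derive1_comp.
Qed.

Lemma is_derive_big_sum (W : normedModType R) (I : Type) (r : seq I)
    (P : pred I) (F : I -> V -> W) (dF : I -> W) (x v : V) :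
  (forall i, P i -> is_derive x v (F i) (dF i)) ->
  is_derive x v (fun y => \sum_(i <- r | P i) F i y) (\sum_(i <- r | P i) dF i).
Proof.
move=> dFi; rewrite -fct_sumE.
by elim/big_ind2: _ => // *; [exact: is_derive_cst | exact: is_deriveD].
Qed.

End DirectionalDerivative.

Lemma is_derive_mulmx_entry (R : realType) (m n : nat) (A : 'M[R]_(m, n))
    (i : 'I_m) (x v : 'cV[R]_n) :
  is_derive x v (fun y => (A *m y) i 0) ((A *m v) i 0).
Proof.
apply/is_derive_lineP.
have -> : (fun h : R => (A *m (h *: v + x)) i 0) =
          (fun h => (A *m v) i 0 * h + (A *m x) i 0).
  by apply/funext => h; rewrite mulmxDr -scalemxAr !mxE mulrC.
by apply: is_derive_eq; rewrite /GRing.scale /= mulr1 addr0.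
Qed.

Lemma ln_prod (R : realType) (I : Type) (r : seq I) (P : pred I) (F : I -> R) :
  (forall i, P i -> 0 < F i) ->
  ln (\prod_(i <- r | P i) F i) = \sum_(i <- r | P i) ln (F i).
Proof.
move=> F_gt0; elim: r => [|a r IH]; first by rewrite !big_nil ln1.
rewrite !big_cons; case: ifP => // Pa.
by rewrite lnM ?IH ?posrE ?F_gt0 ?prodr_gt0.
Qed.

Section Logistic.
Variable R : realType.
Implicit Types (w : R) (b : bool).

Lemma logisticE w : logistic w = (1 + expR (- w))^-1.
Proof. by rewrite /logistic div1r. Qed.

Lemma logistic_gt0 w : 0 < logistic w.
Proof. by rewrite logisticE invr_gt0 addr_gt0 ?expR_gt0. Qed.

Lemma subr_logistic w : 1 - logistic w = expR (- w) * logistic w.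
Proof.
have ne0 : 1 + expR (- w) != 0 by rewrite gt_eqF ?addr_gt0 ?expR_gt0.
by rewrite logisticE; field.
Qed.

Lemma bern_logistic_gt0 b w : 0 < bern b (logistic w).
Proof.
by case: b; rewrite /= ?subr_logistic ?mulr_gt0 ?expR_gt0 ?logistic_gt0.
Qed.

Lemma is_derive_logistic w :
  is_derive w 1 (@logistic R) (logistic w * (1 - logistic w)).
Proof.
have ne0 : 1 + expR (- w) != 0 by rewrite gt_eqF ?addr_gt0 ?expR_gt0.
have de : is_derive w 1 (fun t => 1 + expR (- t)) (- expR (- w)).
  rewrite -[X in is_derive _ _ _ X]add0r -[X in _ + X]mulrN1.
  exact: is_deriveD (is_derive1_comp (is_derive_expR _) (is_deriveNid _ _)).
have -> : logistic w * (1 - logistic w) = - (1 + expR (- w)) ^- 2 *: - expR (- w).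
  by rewrite subr_logistic logisticE /GRing.scale /=; field.
have -> : @logistic R = (fun t => (1 + expR (- t))^-1).
  by apply/funext => t; rewrite logisticE.
exact: (@is_deriveV R (fun t => 1 + expR (- t))).
Qed.

Lemma is_derive_ln_bern_logistic b w :
  is_derive w 1 (fun t => ln (bern b (logistic t))) (b%:R - logistic w).
Proof.
have [ne0 ne1] : logistic w != 0 /\ 1 - logistic w != 0.
  by have := bern_logistic_gt0 false w; split; rewrite gt_eqF ?logistic_gt0.
have dsub : is_derive w 1 (fun t => 1 - logistic t) (0 - logistic w * (1 - logistic w)).
  exact (is_deriveB (is_derive_cst (1 : R) w 1) (is_derive_logistic w)).
case: b => /=; apply: is_derive_eq.
- exact (is_derive1_comp (is_derive1_ln (logistic_gt0 w)) (is_derive_logistic w)).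
- by field.
- exact (is_derive1_comp (g := fun t => 1 - logistic t)
    (is_derive1_ln (bern_logistic_gt0 false w)) dsub).
- by rewrite /=; field.
Qed.

End Logistic.

Section Model.
Variables (R : realType) (p q : nat) (Z : 'M[R]_(p, q)).
Implicit Types (omega v : 'cV[R]_q) (gamma : {ffun 'I_p -> bool}).

Lemma mprobE omega i : mprob Z omega i = logistic ((Z *m omega) i 0).
Proof. by rewrite /mprob -row_mul mxE. Qed.

Lemma prior_gamma_gt0 omega gamma : 0 < prior_gamma Z omega gamma.
Proof. by apply: prodr_gt0 => i _; rewrite /mprob bern_logistic_gt0. Qed.

Lemma is_derive_ln_prior_gamma gamma omega v :
  is_derive omega v (fun w => ln (prior_gamma Z w gamma))
    (\sum_i ((gamma i)%:R - mprob Z omega i) * (Z *m v) i 0).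
Proof.
have -> : (fun w => ln (prior_gamma Z w gamma)) =
          (fun w => \sum_i ln (bern (gamma i) (logistic ((Z *m w) i 0)))).
  apply/funext => w; rewrite ln_prod => [|i _]; last exact: bern_logistic_gt0.
  by apply: eq_bigr => i _; rewrite mprobE.
apply: is_derive_big_sum => i _; rewrite mprobE.
exact (is_derive_comp1 (is_derive_ln_bern_logistic _ _)
                       (is_derive_mulmx_entry Z i omega v)).
Qed.

Section Posterior.
Variables (lik : {ffun 'I_p -> bool} -> R) (omega' : 'cV[R]_q).
Hypotheses (lik_ge0 : forall gamma, 0 <= lik gamma)
           (lik_gt0 : exists gamma, 0 < lik gamma).

Lemma sum_posterior : \sum_gamma posterior Z lik omega' gamma = 1.
Proof.
have [gamma0 lik0] := lik_gt0.
rewrite /posterior -mulr_suml divff // gt_eqF // (bigD1 gamma0) //=.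
rewrite ltr_pwDl ?mulr_gt0 ?prior_gamma_gt0 ?sumr_ge0 // => gamma _.
by rewrite mulr_ge0 ?lik_ge0 ?ltW ?prior_gamma_gt0.
Qed.

Lemma pihatE i :
  pihat Z lik omega' i = \sum_gamma posterior Z lik omega' gamma * (gamma i)%:R.
Proof.
rewrite /pihat big_mkcond; apply: eq_bigr => gamma _.
by case: (gamma i); rewrite ?mulr1 ?mulr0.
Qed.

Lemma is_derive_fobj omega v :
  is_derive omega v (fobj Z lik omega')
    (\sum_i (pihat Z lik omega' i - mprob Z omega i) * (Z *m v) i 0).
Proof.
set P := posterior Z lik omega'.
apply: is_derive_eq.
  apply: is_derive_big_sum => gamma _.
  exact (is_deriveZ (P gamma) (is_derive_ln_prior_gamma gamma omega v)).
under eq_bigr do rewrite /GRing.scale /= mulr_sumr.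
rewrite exchange_big /=; apply: eq_bigr => i _.
rewrite pihatE mulrBl mulr_suml -[mprob _ _ _ * _]mul1r -sum_posterior.
by rewrite !mulr_suml -sumrB; apply: eq_bigr => gamma _; rewrite -/P; ring.
Qed.

End Posterior.

Section Prior.
Variable g : R.
Hypotheses (g_gt0 : 0 < g) (p_gt0 : (0 < p)%N) (detZZ_gt0 : 0 < \det (Z^T *m Z)).

Lemma gram_quad_form omega :
  (omega^T *m (Z^T *m Z) *m omega) 0 0 = \sum_i (Z *m omega) i 0 ^+ 2.
Proof.
rewrite mulmxA -trmx_mul -mulmxA mxE.
by apply: eq_bigr => i _; rewrite mxE expr2.
Qed.

Let det_scaled_gram_gt0 : 0 < \det ((p%:R)^-1 *: (Z^T *m Z)).
Proof. by rewrite detZ mulr_gt0 // exprn_gt0 // invr_gt0 ltr0n. Qed.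

Lemma invmx_prior_cov : invmx (prior_cov Z g) = (g * p%:R)^-1 *: (Z^T *m Z).
Proof.
have unit_scaled_gram : (p%:R)^-1 *: (Z^T *m Z) \in unitmx.
  by rewrite unitmxE unitfE gt_eqF ?det_scaled_gram_gt0.
rewrite /prior_cov invmxZ ?invmxK ?scalerA ?invfM //.
by rewrite unitmxE detZ det_inv unitfE mulf_neq0 ?expf_neq0 ?invr_eq0 ?gt_eqF.
Qed.

Lemma prior_omega0_gt0 : 0 < prior_omega Z g 0.
Proof.
rewrite /prior_omega /mvn0_pdf mulr_gt0 ?expR_gt0 // invr_gt0 sqrtr_gt0.
by rewrite mulr_gt0 ?exprn_gt0 ?mulr_gt0 ?pi_gt0 // /prior_cov detZ det_inv
  mulr_gt0 ?exprn_gt0 ?invr_gt0 ?det_scaled_gram_gt0.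
Qed.

Lemma ln_prior_omega omega :
  ln (prior_omega Z g omega) =
  ln (prior_omega Z g 0) - (g * p%:R)^-1 / 2 * \sum_i (Z *m omega) i 0 ^+ 2.
Proof.
have quadE (x : 'cV[R]_q) : (x^T *m invmx (prior_cov Z g) *m x) 0 0 =
                            (g * p%:R)^-1 * \sum_i (Z *m x) i 0 ^+ 2.
  rewrite invmx_prior_cov -scalemxAr -scalemxAl [LHS]mxE; congr (_ * _).
  exact: gram_quad_form.
have := prior_omega0_gt0; rewrite /prior_omega /mvn0_pdf !quadE mulmx0.
under eq_bigr do rewrite mxE expr2 mulr0.
rewrite big1 ?mulr0 ?expR0 ?mulr1 // => C_gt0.
by rewrite lnM ?posrE ?expR_gt0 // expRK; congr (_ + _); ring.
Qed.

Lemma is_derive_ln_prior_omega omega v :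
  is_derive omega v (fun w => ln (prior_omega Z g w))
    (- (g * p%:R)^-1 * \sum_i (Z *m omega) i 0 * (Z *m v) i 0).
Proof.
have -> : (fun w => ln (prior_omega Z g w)) = fun w =>
    ln (prior_omega Z g 0) - (g * p%:R)^-1 / 2 * \sum_i (Z *m w) i 0 ^+ 2.
  by apply/funext => w; rewrite ln_prior_omega.
apply: is_derive_eq.
  apply: is_deriveB; apply: is_deriveZ; apply: is_derive_big_sum => i _.
  exact (@is_deriveX _ _ _ 2 _ _ _ (is_derive_mulmx_entry Z i omega v)).
rewrite /GRing.scale /= add0r mulr_sumr -sumrN mulr_sumr.
by apply: eq_bigr => i _; lra.
Qed.

End Prior.

Lemma is_derive_mstep_obj (g : R) (lik : {ffun 'I_p -> bool} -> R)
    (omega' omega v : 'cV[R]_q) :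
  0 < g -> (0 < p)%N -> 0 < \det (Z^T *m Z) ->
  (forall gamma, 0 <= lik gamma) -> (exists gamma, 0 < lik gamma) ->
  is_derive omega v (mstep_obj Z g lik omega')
    (\sum_i (pihat Z lik omega' i - mprob Z omega i - (Z *m omega) i 0 / (g * p%:R))
            * (Z *m v) i 0).
Proof.
move=> g_gt0 p_gt0 detZZ_gt0 lik_ge0 lik_gt0.
apply: is_derive_eq.
  exact (is_deriveD (is_derive_fobj omega' lik_ge0 lik_gt0 omega v)
                    (is_derive_ln_prior_omega g_gt0 p_gt0 detZZ_gt0 omega v)).
by rewrite mulr_sumr -big_split /=; apply: eq_bigr => i _; ring.
Qed.

End Model.

Section ClassMatrix.
Variables (R : realType) (p q : nat) (kappa : 'I_p -> 'I_q).

Definition class_mx : 'M[R]_(p, q) := \matrix_(i, j) (kappa i == j)%:R.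

(* An empty class has mean 0 / 0 = 0; it never matters since it has no members. *)
Definition class_mean (x : 'I_p -> R) (j : 'I_q) : R :=
  (\sum_(i | kappa i == j) x i) / #|[pred i | kappa i == j]|%:R.

Lemma class_mx_mulmxE n (A : 'M[R]_(q, n)) i l : (class_mx *m A) i l = A (kappa i) l.
Proof.
rewrite mxE (bigD1 (kappa i)) //= big1 => [|j /negPf kj].
  by rewrite mxE eqxx mul1r addr0.
by rewrite mxE eq_sym kj mul0r.
Qed.

Lemma class_mx_factor (Z : 'M[R]_(p, q)) (U : 'M[R]_q) :
  (forall i, row i Z = row (kappa i) U) -> Z = class_mx *m U.
Proof.
move=> Z_rows; apply/matrixP => i l; rewrite class_mx_mulmxE.
by have /matrixP/(_ 0 l) := Z_rows i; rewrite !mxE.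
Qed.

Lemma class_mx_mean (x : 'I_p -> R) j :
  (\sum_i class_mx i j * x i) / (\sum_i class_mx i j) = class_mean x j.
Proof.
rewrite /class_mean -sum1_card natr_sum !(big_mkcond (fun i => kappa i == j)) /=.
by congr (_ / _); apply: eq_bigr => i _; rewrite mxE; case: eqP; rewrite ?mul1r ?mul0r.
Qed.

Lemma sum_class_centered (y : 'I_q -> R) (x : 'I_p -> R) :
  \sum_i y (kappa i) * (x i - class_mean x (kappa i)) = 0.
Proof.
rewrite (partition_big kappa xpredT) //= big1 // => j _.
under eq_bigr => i /eqP -> do rewrite mulrBr.
rewrite sumrB -!mulr_sumr sumr_const -[_^-1 *+ _]mulr_natr.
have [n0|n_neq0] := eqVneq #|[pred i | kappa i == j]| 0%N.
  rewrite big_pred0 ?mul0r ?mulr0 ?subrr // => i.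
  by rewrite -[_ == _]/(i \in [pred i | kappa i == j]) (card0_eq n0).
by rewrite mulVf ?mulr1 ?subrr // pnatr_eq0.
Qed.

Lemma gram_class_mx :
  class_mx^T *m class_mx = diag_mx (\row_j #|[pred i | kappa i == j]|%:R).
Proof.
apply/matrixP => j l; rewrite !mxE.
have [<-|jl] := eqVneq j l; last first.
  rewrite mulr0n big1 // => i _; rewrite !mxE.
  by case: eqP => [->|]; rewrite ?(negPf jl) ?mul0r ?mulr0.
rewrite mulr1n -sum1_card natr_sum [RHS]big_mkcond; apply: eq_bigr => i _.
by rewrite !mxE inE; case: eqP; rewrite ?mulr1 ?mulr0.
Qed.

Lemma det_gram_class_mx_gt0 (U : 'M[R]_q) :
  U \in unitmx -> (forall j, exists i, kappa i = j) ->
  0 < \det ((class_mx *m U)^T *m (class_mx *m U)).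
Proof.
move=> U_unit kappa_surj.
rewrite trmx_mul mulmxA -(mulmxA U^T) gram_class_mx !det_mulmx det_tr det_diag.
rewrite mulrAC mulr_gt0 ?prodr_gt0 // => [|j _].
  by rewrite -expr2 exprn_even_gt0 //= -unitfE -unitmxE.
have [i kappa_i] := kappa_surj j; rewrite mxE ltr0n; apply/card_gt0P.
by exists i; rewrite inE kappa_i.
Qed.

End ClassMatrix.

Arguments class_mx {R p q} kappa.

Theorem proposition1 (R : realType) (p q : nat) (Z : 'M[R]_(p, q)) (U : 'M[R]_q)
  (g : R) (lik : {ffun 'I_p -> bool} -> R) (omega' : 'cV[R]_q)
  (h : R -> R -> R) :
  distinct_rows_of Z U ->
  \rank U = q ->
  0 < g ->
  (forall gamma, 0 <= lik gamma) ->
  (exists gamma, 0 < lik gamma) ->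
  (forall a c : R, 0 < c -> logistic (h a c) + h a c / c = a) ->
  let omega_tilde : 'cV[R]_q :=
    \col_(j < q) h (acoef Z U lik omega' j) (g * p%:R) in
  let omega_hat : 'cV[R]_q := invmx U *m omega_tilde in
  forall k : 'I_q,
    is_derive omega_hat (delta_mx k 0 : 'cV[R]_q) (mstep_obj Z g lik omega') 0.
Proof.
move=> [U_inj [U_rows Z_rows]] rkU g_gt0 lik_ge0 lik_gt0 h_solves
  omega_tilde omega_hat k.
have [kappa Z_kappa] := choice Z_rows.
have ZE : Z = class_mx kappa *m U := class_mx_factor Z_kappa.
have kappa_surj j : exists i, kappa i = j.
  by have [i Zi] := U_rows j; exists i; apply: U_inj; rewrite /= -Z_kappa.
have U_unit : U \in unitmx by rewrite -row_free_unit /row_free rkU.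
have p_gt0 : (0 < p)%N by have [i _] := kappa_surj k; exact: leq_ltn_trans (ltn_ord i).
have gp_gt0 : 0 < g * p%:R by rewrite mulr_gt0 ?ltr0n.
have detZZ_gt0 : 0 < \det (Z^T *m Z) by rewrite ZE det_gram_class_mx_gt0.
have Zomega_hat i : (Z *m omega_hat) i 0 = omega_tilde (kappa i) 0.
  by rewrite ZE -mulmxA /omega_hat mulKVmx // class_mx_mulmxE.
have acoef_mean j : acoef Z U lik omega' j = class_mean kappa (pihat Z lik omega') j.
  by rewrite /acoef (_ : Z *m invmx U = class_mx kappa) ?class_mx_mean // ZE mulmxK.
have Zk i : (Z *m (delta_mx k 0 : 'cV[R]_q)) i 0 = U (kappa i) k.
  by rewrite -colE mxE ZE class_mx_mulmxE.
apply: is_derive_eq (is_derive_mstep_obj _ _ _ g_gt0 p_gt0 detZZ_gt0 lik_ge0 lik_gt0) _.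
rewrite -[RHS](sum_class_centered kappa (fun j => U j k) (pihat Z lik omega')).
apply: eq_bigr => i _; rewrite Zk mprobE Zomega_hat -acoef_mean /omega_tilde mxE.
by rewrite -[in RHS](h_solves (acoef Z U lik omega' (kappa i)) _ gp_gt0); ring.
Qed.
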